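(* Let $FAF=\langle\mathcal A,\rho\rangle$ be a fuzzy argumentation framework and $E\subseteq\mathcal A$. For every $C\subseteq\mathcal A$: $E\in\mathcal{AE}(FAF,C)$ if and only if for every $S\in SCCS_{FAF}$, $$E\cap S\in\mathcal{AE}\big(FAF\downarrow_{R_{FAF}(S,E)},\,D_{FAF}(S,E)\cap C\big).$$
   Context: Fuzzy sets: a fuzzy set on a crisp set $X$ is a map $S:X\to[0,1]$; $S\subseteq S'$ means $S(x)\le S'(x)$ for all $x$; $\cap,\cup$ are pointwise $\min,\max$; $\mathrm{Supp}(S)=\{x:S(x)>0\}$. A fuzzy point $(x,a)$, $a\in(0,1]$, has value $a$ at $x$ and $0$ elsewhere; $(x,a)\in S$ means $a\le S(x)$. $a*b=\min\{a,b\}$. A fuzzy argumentation framework (FAF) is $\langle\mathcal A,\rho\rangle$ with $\mathrm{Args}$ a crisp set, $\mathcal A$ a fuzzy set on $\mathrm{Args}$, $\rho:\mathrm{Args}\times\mathrm{Args}\to[0,1]$, $\rho_{AB}=\rho(A,B)$; $A$ attacks $B$ iff $\rho_{AB}>0$. Fuzzy arguments are fuzzy points $(A,a)\in\mathcal A$. An attack of $(A,a)$ on $(B,b)$ is tolerable if $\min\{a,\rho_{AB}\}+b\le1$, sufficient otherwise. $(A,a)$ weakens $(B,b)$ to $(B,b')$, $b'=\min\{1-\min\{a,\rho_{AB}\},b\}$. $T\subseteq\mathcal A$ weakening defends $(C,c)$ if for every fuzzy argument $(B,b)$ sufficiently attacking $(C,c)$ there is $(A',a')\in T$ weakening $(B,b)$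 to some $(B,b')$ which tolerably attacks $(C,c)$. $T$ is conflict-free if no $(A,a),(B,b)\in T$ with $(A,a)$ sufficiently attacking $(B,b)$; admissible if conflict-free and it weakening defends every element of $T$. For $C\subseteq\mathcal A$, $\mathcal{AE}(FAF,C)$ is the set of admissible $E$ with $E\subseteq C$. Path-equivalence on $\mathrm{Args}$: $A\sim B$ iff $A=B$ or there are chains of attacks from $A$ to $B$ and from $B$ to $A$. $SCC_{FAF}(A)$ is the fuzzy set with value $\mathcal A(B)$ at each $B\sim A$, $0$ elsewhere; $SCCS_{FAF}$ is the set of these strongly connected components. $outparents_{FAF}(S)$ is the fuzzy set of $(B,\mathcal A(B))$ with $B\notin\mathrm{Supp}(S)$ attacking some argument of $\mathrm{Supp}(S)$. For $T\subseteq\mathcal A$, $FAF\downarrow_T=\langle T,\rho|_{\mathrm{Supp}(T)\times\mathrm{Supp}(T)}\rangle$, and notions in $FAF\downarrow_T$ refer to its own fuzzy arguments and attacks. For $E\subseteq\mathcal A$, $S\in SCCS_{FAF}$: $L_{FAF}(S,E)(A)=\max_B\big((E\cap outparents_{FAF}(S))(B)*\rho_{BA}\big)$ for $A\in\mathrm{Supp}(S)$, $0$ elsewhere; $R_{FAF}(S,E)(A)=\min\{\mathcal A(A),1-L_{FAF}(S,E)(A)\}$ for $A\in\mathrm{Supp}(S)$, $0$ elsewhere; $D_{FAF}(S,E)$ is the union of fuzzy points $(A,a)\in R_{FAF}(S,E)$ such that for every $(B,b)\in outparents_{FAF}(S)$ sufficiently attacking $(A,a)$ there is $(C,c)\in E$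 weakening $(B,b)$ to some $(B,b')$ which tolerably attacks $(A,a)$. *)

From HB Require Import structures.
From mathcomp Require Import all_boot all_order all_algebra.
From mathcomp Require Import boolp classical_sets reals.
Set Implicit Arguments. Unset Strict Implicit. Unset Printing Implicit Defensive.
Import Order.TTheory GRing.Theory Num.Theory.
Local Open Scope ring_scope.
Local Open Scope classical_set_scope.

(* A fuzzy argumentation framework <A, rho> over the crisp set Args. *)
Record faf (R : realType) (Args : finType) := FAF {
  fargs : Args -> R;
  fatt : Args -> Args -> R
}.

Section FAFDefs.
Variables (R : realType) (Args : finType).
Implicit Types (S T E C : Args -> R) (F : faf R Args).

Definition is_fuzzy S := forall x, 0 <= S x <= 1.
Definition fsubset S S' := forall x, S x <= S' x.
Definition fcap S S' : Args -> R := fun x => Num.min (S x) (S' x).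
Definition fpoint_in S (x : Args) (a : R) := (0 < a <= 1) /\ a <= S x.

Definition suff_att (rho : Args -> Args -> R) x a y b :=
  0 < rho x y /\ 1 < Num.min a (rho x y) + b.
Definition tol_att (rho : Args -> Args -> R) x a y b :=
  0 < rho x y /\ Num.min a (rho x y) + b <= 1.
Definition weaken (rho : Args -> Args -> R) z c x b : R :=
  Num.min (1 - Num.min c (rho z x)) b.

Definition weak_defends F T y c :=
  forall x b, fpoint_in (fargs F) x b -> suff_att (fatt F) x b y c ->
    exists z a, fpoint_in T z a /\ tol_att (fatt F) x (weaken (fatt F) z a x b) y c.

Definition conflict_free F T :=
  ~ (exists x a y b, [/\ fpoint_in T x a, fpoint_in T y b & suff_att (fatt F) x a y b]).

Definition admissible F T :=
  [/\ fsubset T (fargs F), conflict_free F T &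
      forall y c, fpoint_in T y c -> weak_defends F T y c].

Definition AE F C E := admissible F E /\ fsubset E C.

Definition attacks F : rel Args := fun x y => 0 < fatt F x y.

Definition path_equiv F (x y : Args) : bool :=
  connect (attacks F) x y && connect (attacks F) y x.

Definition SCC F (x : Args) : Args -> R :=
  fun y => if path_equiv F x y then fargs F y else 0.

Definition outparents F S : Args -> R :=
  fun y => if ~~ (0 < S y) && [exists z, (0 < S z) && attacks F y z]
           then fargs F y else 0.

Definition Lfun F S E : Args -> R :=
  fun x => if 0 < S x then
             \big[Num.max/0]_(y : Args) Num.min (fcap E (outparents F S) y) (fatt F y x)
           else 0.

Definition Rfun F S E : Args -> R :=
  fun x => if 0 < S x then Num.min (fargs F x) (1 - Lfun F S E x) else 0.

Definition D_point F S E (x : Args) (a : R) :=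
  fpoint_in (Rfun F S E) x a /\
  forall y b, fpoint_in (outparents F S) y b -> suff_att (fatt F) y b x a ->
    exists z c, fpoint_in E z c /\ tol_att (fatt F) y (weaken (fatt F) z c y b) x a.

(* D_F(S,E): the union of those fuzzy points (sup of the empty set is 0) *)
Definition Dfun F S E : Args -> R :=
  fun x => sup [set a | D_point F S E x a].

Definition restrict F T : faf R Args :=
  FAF T (fun x y => if (0 < T x) && (0 < T y) then fatt F x y else 0).

End FAFDefs.

(* Only two properties of strongly connected components are used: an SCC S
   agrees with the fuzzy set of arguments on its support, and every argument
   lies in its own SCC.  Conflict-freeness of a fuzzy set T is the pointwise
   inequality min(T x, rho x y) + T y <= 1.  An argument z of E outside S that
   attacks w inside S contributes min(E z, rho z w) to L(S,E) w, so every
   point of R(S,E) at w already lies below 1 - min(E z, rho z w): weakening by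
   arguments outside S is idle inside S.  This transfers admissibility from E
   to E ∩ S in the restricted framework, and conversely settles attacks on E
   coming from outside S.
   Conversely, if an attacker (w,b) inside S of (y,c) is not defeated by any
   single point (z, E z), then L(S,E) w < c, so cutting b down to
   min(1 - L(S,E) w, b) yields a sufficient attack from a point of R(S,E); the
   local defence against it also defeats (w,b).  If the attacker lies outside
   S, then c <= D(S,E) y, and the defining condition of D(S,E) survives at its
   supremum because only the finitely many defenders (z, E z) matter. *)

From HB Require Import structures.
From mathcomp Require Import all_boot all_order all_algebra.
From mathcomp Require Import boolp classical_sets reals.
From mathcomp Require Import lra.
Import Order.TTheory GRing.Theory Num.Theory.
Local Open Scope ring_scope.
Set Implicit Arguments. Unset Strict Implicit.

Section Attacks.
Variables (R : realType) (Args : finType).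
Implicit Types (rho : Args -> Args -> R) (S T : Args -> R) (F : faf R Args).

Definition weakened_by rho T w b y c :=
  exists z a, fpoint_in T z a /\ tol_att rho w (weaken rho z a w b) y c.

Lemma fcap_subl S T : fsubset (fcap S T) S.
Proof. by move=> x; rewrite /fcap ge_min lexx. Qed.

Lemma fcap_subr S T : fsubset (fcap S T) T.
Proof. by move=> x; rewrite /fcap ge_min lexx orbT. Qed.

Lemma weakened_byW rho T w b y c c' :
  c' <= c -> weakened_by rho T w b y c -> weakened_by rho T w b y c'.
Proof.
by move=> c'c [z [a [za [r0 tol]]]]; exists z, a; split=> //; split=> //; lra.
Qed.

Lemma weaken_antitone rho z a a' x b :
  a <= a' -> weaken rho z a' x b <= weaken rho z a x b.
Proof. by move=> aa'; rewrite /weaken le_min2 // lerB // le_min2. Qed.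

Lemma weaken_id rho z a x b :
  b <= 1 - Num.min a (rho z x) -> weaken rho z a x b = b.
Proof. exact: min_r. Qed.

Lemma weaken_tol_eq rho z a w b b' y c : b' <= b ->
  suff_att rho w b' y c -> tol_att rho w (weaken rho z a w b') y c ->
  weaken rho z a w b = weaken rho z a w b'.
Proof.
move=> b'b [_ hs] [_ tol]; rewrite /weaken in tol *.
have [b'm|mb'] := leP b' (1 - Num.min a (rho z w)).
  by move: tol; rewrite (min_r b'm); lra.
by rewrite min_l // (le_trans (ltW mb') b'b).
Qed.

Lemma conflict_freeP F T : (forall x, T x <= 1) ->
  conflict_free F T <-> forall x y, Num.min (T x) (fatt F x y) + T y <= 1.
Proof.
move=> T1; split=> [cf x y | cfT [x [a [y [b [[_ xa] [_ yb] [_ hs]]]]]]];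
  last first.
  by have := cfT x y; have := le_min2 xa (lexx (fatt F x y)); lra.
rewrite leNgt; apply/negP => hs; have := T1 x; have := T1 y.
have : Num.min (T x) (fatt F x y) <= T x by rewrite ge_min lexx.
have : Num.min (T x) (fatt F x y) <= fatt F x y by rewrite ge_min lexx orbT.
move=> mr mT Ty1 Tx1; apply: cf; exists x, (T x), y, (T y).
by split; [split; [apply/andP; split|] | split; [apply/andP; split|] | split];
  lra.
Qed.

Lemma conflict_free_sub F F' T T' :
  (forall x y, fatt F' x y <= fatt F x y) -> fsubset T' T ->
  conflict_free F T -> conflict_free F' T'.
Proof.
move=> FF' TT' cf [x [a [y [b [[a01 xa] [b01 yb] [r0 hs]]]]]]; apply: cf.
exists x, a, y, b; split; [split=> // | split=> // | split].
- exact: le_trans (TT' x).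
- exact: le_trans (TT' y).
- exact: lt_le_trans (FF' x y).
- by have := le_min2 (lexx a) (FF' x y); lra.
Qed.

Lemma weakened_by_closed rho T w b y c e : (forall z, T z <= 1) -> e < c ->
  (forall c', e < c' < c -> weakened_by rho T w b y c') ->
  weakened_by rho T w b y c.
Proof.
move=> T1 ec near; apply: contrapT => notc.
pose g z := Num.min (weaken rho z (T z) w b) (rho w y).
pose e' := \big[Num.max/e]_(z | 0 < T z) (1 - g z).
have [z0 [a0 [_ [r0 _]]]] := near ((e + c) / 2) (ltac:(apply/andP; split; lra)).
have e'c : e' < c.
  apply: bigmax_lt => // z Tz; rewrite ltrBlDr ltNge; apply/negP => gc.
  apply: notc; exists z, (T z); split; first by split=> //; rewrite Tz T1.
  by split=> //; rewrite /g in gc; lra.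
have ee' : e <= e' := bigmax_ge_id _ _ _ _.
have [z [a [[/andP[a0' _] az] [_ tol]]]] :=
  near ((e' + c) / 2) (ltac:(apply/andP; split; lra)).
have Tz : 0 < T z := lt_le_trans a0' az.
have : 1 - g z <= e' by exact: le_bigmax_cond.
have := le_min2 (weaken_antitone rho z w b az) (lexx (rho w y)).
rewrite -/e' /g; lra.
Qed.

Lemma restrict_attE F T u v :
  0 < T u -> 0 < T v -> fatt (restrict F T) u v = fatt F u v.
Proof. by move=> Tu Tv; rewrite /= Tu Tv. Qed.

Lemma restrict_att_gt0 F T u v : 0 < fatt (restrict F T) u v ->
  [/\ 0 < T u, 0 < T v & fatt (restrict F T) u v = fatt F u v].
Proof. by rewrite /=; case: ifP => [/andP[-> ->]|] //; rewrite ltxx. Qed.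

Lemma restrict_att_le F T u v :
  0 <= fatt F u v -> fatt (restrict F T) u v <= fatt F u v.
Proof. by rewrite /=; case: ifP. Qed.

End Attacks.

Lemma SCC_crisp (R : realType) (Args : finType) (F : faf R Args) x y :
  0 < SCC F x y -> SCC F x y = fargs F y.
Proof. by rewrite /SCC; case: ifP => //; rewrite ltxx. Qed.

Lemma SCC_self (R : realType) (Args : finType) (F : faf R Args) y :
  SCC F y y = fargs F y.
Proof. by rewrite /SCC /path_equiv connect0. Qed.

Section Component.
Variables (R : realType) (Args : finType) (F : faf R Args) (E S : Args -> R).
Hypothesis A_ge0 : forall y, 0 <= fargs F y.
Hypothesis E_le1 : forall y, E y <= 1.
Hypothesis E_subA : fsubset E (fargs F).

Local Notation A := (fargs F).
Local Notation rho := (fatt F).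

Lemma outparentsE w y : ~~ (0 < S w) -> 0 < S y -> 0 < rho w y ->
  outparents F S w = A w.
Proof.
move=> Sw Sy wy; rewrite /outparents Sw /=; case: ifPn => // /existsPn /(_ y).
by rewrite Sy /attacks wy.
Qed.

Lemma outparents_subA : fsubset (outparents F S) A.
Proof. by move=> y; rewrite /outparents; case: ifP. Qed.

Lemma Lfun_ge0 y : 0 <= Lfun F S E y.
Proof. by rewrite /Lfun; case: ifP => // _; exact: bigmax_ge_id. Qed.

Lemma Lfun_le y t : 0 <= t ->
  (forall w, Num.min (E w) (rho w y) <= t) -> Lfun F S E y <= t.
Proof.
move=> t0 ht; rewrite /Lfun; case: ifP => // _; apply: bigmax_le => // w _.
by apply: le_trans (ht w); rewrite le_min2 // fcap_subl.
Qed.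

Lemma Lfun_lt y t : 0 < t ->
  (forall w, Num.min (E w) (rho w y) < t) -> Lfun F S E y < t.
Proof.
move=> t0 ht; rewrite /Lfun; case: ifP => // _; apply: bigmax_lt => // w _.
by apply: le_lt_trans (ht w); rewrite le_min2 // fcap_subl.
Qed.

Lemma Lfun_ge_outside w y : 0 < S y -> ~~ (0 < S w) ->
  Num.min (E w) (rho w y) <= Lfun F S E y.
Proof.
move=> Sy Sw; have [r0|r_gt0] := lerP (rho w y) 0.
  by apply: le_trans (Lfun_ge0 y); rewrite ge_min r0 orbT.
rewrite /Lfun Sy; apply: le_trans (le_bigmax _ _ w).
by rewrite /fcap (outparentsE Sw Sy r_gt0) (min_l (E_subA w)).
Qed.

Lemma Rfun_gt0 y : 0 < Rfun F S E y -> 0 < S y.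
Proof. by rewrite /Rfun; case: ifP => //; rewrite ltxx. Qed.

Lemma RfunE y : 0 < S y -> Rfun F S E y = Num.min (A y) (1 - Lfun F S E y).
Proof. by rewrite /Rfun => ->. Qed.

Lemma Rfun_subA : fsubset (Rfun F S E) A.
Proof. by move=> y; rewrite /Rfun; case: ifP => _; rewrite ?ge_min ?lexx. Qed.

Lemma Rfun_le_compl y : 0 < S y -> Rfun F S E y <= 1 - Lfun F S E y.
Proof. by move=> Sy; rewrite RfunE // ge_min lexx orbT. Qed.

Lemma weaken_outside z a w b : 0 < S w -> ~~ (0 < S z) -> a <= E z ->
  b <= Rfun F S E w -> weaken rho z a w b = b.
Proof.
move=> Sw Sz az bR; apply: weaken_id.
have := Lfun_ge_outside Sw Sz; have := le_min2 az (lexx (rho z w)).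
have := Rfun_le_compl Sw; lra.
Qed.

Lemma Lfun_lt_of_not_weakened w b y c : 0 < c -> 0 < rho w y ->
  ~ weakened_by rho E w b y c -> Lfun F S E w < c.
Proof.
move=> c0 r0 none; apply: Lfun_lt => // z; have [Ez0|Ez] := lerP (E z) 0.
  by apply: le_lt_trans c0; rewrite ge_min Ez0.
rewrite ltNge; apply/negP => cz; apply: none; exists z, (E z).
split; first by split=> //; rewrite Ez E_le1.
have : weaken rho z (E z) w b <= 1 - Num.min (E z) (rho z w).
  by rewrite /weaken ge_min lexx.
have : Num.min (weaken rho z (E z) w b) (rho w y) <= weaken rho z (E z) w b.
  by rewrite ge_min lexx.
by split=> //; lra.
Qed.

Lemma fcap_crisp y : S y = A y -> fcap E S y = E y.
Proof. by move=> Sy; rewrite /fcap Sy; apply/min_idPl/E_subA. Qed.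

Lemma Dset_ubound y : has_ubound [set a | D_point F S E y a].
Proof. by exists 1 => a [[/andP[_ a1] _] _]. Qed.

Lemma Dfun_ge0 y : 0 <= Dfun F S E y.
Proof.
rewrite /Dfun; have [[a ha]|none] := pselect (exists a, D_point F S E y a).
  apply: le_trans (ub_le_sup (Dset_ubound y) ha).
  by case: ha => [[/andP[/ltW a0 _] _] _].
by rewrite sup_out // => -[[a ha] _]; apply: none; exists a.
Qed.

Lemma D_point_le y a a' :
  D_point F S E y a -> 0 < a' -> a' <= a -> D_point F S E y a'.
Proof.
move=> [[/andP[_ a1] aR] def] a'0 a'a; split.
  by split; [rewrite a'0 (le_trans a'a a1) | exact: le_trans aR].
move=> w b wb [r0 hs]; have hs' : 1 < Num.min b (rho w y) + a by lra.
by apply: weakened_byW a'a _; apply: def wb _.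
Qed.

Lemma Dfun_weakened y c w b : 0 < c -> c <= Dfun F S E y ->
  fpoint_in (outparents F S) w b -> suff_att rho w b y c ->
  weakened_by rho E w b y c.
Proof.
move=> c0 cD wb [r0 hs].
have [ne|none] := pselect (exists a, D_point F S E y a); last first.
  move: cD; rewrite /Dfun sup_out => [|[[a ha] _]]; first lra.
  by apply: none; exists a.
apply: (weakened_by_closed (e := Num.max 0 (1 - Num.min b (rho w y)))) => //.
  by rewrite gt_max c0 /=; lra.
move=> c' /andP[]; rewrite gt_max => /andP[c'0 c'b] c'c.
have [a Da c'a] := sup_gt ne (lt_le_trans c'c cD).
have [_ def] := D_point_le Da c'0 (ltW c'a).
by apply: def wb _; split=> //; lra.
Qed.

Hypothesis rho_ge0 : forall x y, 0 <= rho x y.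
Hypothesis S_crisp : forall y, 0 < S y -> S y = A y.

Lemma fcap_sub_Rfun : conflict_free F E -> fsubset (fcap E S) (Rfun F S E).
Proof.
move=> cf y; rewrite /Rfun; case: ifPn => Sy; last first.
  by apply: le_trans (fcap_subr _ _ y) _; rewrite leNgt.
apply: le_trans (fcap_subl _ _ y) _; rewrite le_min E_subA /=.
suff : Lfun F S E y <= 1 - E y by lra.
apply: Lfun_le => [|w]; first by have := E_le1 y; lra.
by have := (conflict_freeP F E_le1).1 cf w y; lra.
Qed.

Lemma weak_defends_fcap y c : admissible F E -> fpoint_in (fcap E S) y c ->
  weak_defends (restrict F (Rfun F S E)) (fcap E S) y c.
Proof.
move=> [_ cf def] [c01 cy] w b [b01 bR] [r0 hs].
have [Rw Ry rE] := restrict_att_gt0 r0; rewrite rE in r0 hs.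
have yc : fpoint_in E y c by split=> //; exact: le_trans cy (fcap_subl _ _ y).
have wb : fpoint_in A w b by split=> //; exact: le_trans bR (Rfun_subA w).
have [z [a [[a01 az] [_ tol]]]] := def y c yc w b wb (conj r0 hs).
have Sw := Rfun_gt0 Rw.
case: (boolP (0 < S z)) => Sz; last first.
  rewrite (weaken_outside Sw Sz az bR) in tol.
  by have := lt_le_trans hs tol; rewrite ltxx.
have az' : a <= fcap E S z by rewrite fcap_crisp // S_crisp.
have Rz : 0 < Rfun F S E z.
  case/andP: a01 => a0 _.
  exact: lt_le_trans a0 (le_trans az' (fcap_sub_Rfun cf z)).
exists z, a; split=> //.
by rewrite /tol_att /weaken (restrict_attE _ Rz Rw) (restrict_attE _ Rw Ry).
Qed.

Lemma fcap_sub_Dfun : admissible F E -> fsubset (fcap E S) (Dfun F S E).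
Proof.
move=> [_ cf def] y; have [ES0|ES_gt0] := lerP (fcap E S y) 0.
  exact: le_trans ES0 (Dfun_ge0 y).
have ES1 : fcap E S y <= 1 := le_trans (fcap_subl _ _ y) (E_le1 y).
apply: (ub_le_sup (Dset_ubound y)); split.
  by split; [rewrite ES_gt0 ES1 | exact: fcap_sub_Rfun cf y].
move=> w b [b01 bo] hs; apply: def => //.
  by split; [rewrite ES_gt0 ES1 | exact: fcap_subl].
by split=> //; exact: le_trans bo (outparents_subA w).
Qed.

Lemma AE_restrict_fcap C :
  AE F C E -> AE (restrict F (Rfun F S E)) (fcap (Dfun F S E) C) (fcap E S).
Proof.
move=> [adm EC]; have [_ cf _] := adm.
split; first split.
- exact: fcap_sub_Rfun.
- apply: conflict_free_sub cf => [u v|]; first exact: restrict_att_le.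
  exact: fcap_subl.
- by move=> y c; exact: weak_defends_fcap.
move=> y; rewrite [X in _ <= X]/fcap le_min fcap_sub_Dfun //=.
exact: le_trans (fcap_subl _ _ y) (EC y).
Qed.

Lemma conflict_free_at y : S y = A y ->
  fsubset (fcap E S) (Rfun F S E) ->
  conflict_free (restrict F (Rfun F S E)) (fcap E S) ->
  forall w, Num.min (E w) (rho w y) + E y <= 1.
Proof.
move=> Sy ER cf w.
have m_Ew : Num.min (E w) (rho w y) <= E w by rewrite ge_min lexx.
have [Ey0|Ey] := lerP (E y) 0; first by have := E_le1 w; lra.
have S_y : 0 < S y by rewrite Sy; exact: lt_le_trans Ey (E_subA y).
have EyR : E y <= Rfun F S E y by rewrite -(fcap_crisp Sy); exact: ER.
case: (boolP (0 < S w)) => Sw; last first.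
  by have := Lfun_ge_outside S_y Sw; have := Rfun_le_compl S_y; lra.
have [Ew0|Ew] := lerP (E w) 0; first by have := E_le1 y; lra.
have ESw := fcap_crisp (S_crisp Sw).
have Rw : 0 < Rfun F S E w by rewrite -ESw in Ew; exact: lt_le_trans Ew (ER w).
have ES1 x : fcap E S x <= 1 := le_trans (fcap_subl E S x) (E_le1 x).
have := (conflict_freeP _ ES1).1 cf w y.
by rewrite ESw (fcap_crisp Sy) restrict_attE // (lt_le_trans Ey EyR).
Qed.

Lemma weakened_inside y c w b :
  fsubset (fcap E S) (Rfun F S E) ->
  weak_defends (restrict F (Rfun F S E)) (fcap E S) y c ->
  0 < Rfun F S E y -> 0 < c <= 1 -> 0 < S w -> fpoint_in A w b ->
  suff_att rho w b y c -> weakened_by rho E w b y c.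
Proof.
move=> ER def Ry /andP[c0 c1] Sw [/andP[b0 b1] bA] [r0 hs].
apply: contrapT => none.
have Lc := Lfun_lt_of_not_weakened c0 r0 none.
pose b' := Num.min (1 - Lfun F S E w) b.
have b'b : b' <= b by rewrite ge_min lexx orbT.
have b'0 : 0 < b' by rewrite lt_min b0 andbT; lra.
have b'R : b' <= Rfun F S E w.
  by rewrite RfunE // le_min (le_trans b'b bA) ge_min lexx.
have Rw : 0 < Rfun F S E w := lt_le_trans b'0 b'R.
have hs' : 1 < Num.min b' (rho w y) + c.
  by move: hs; rewrite -!ltrBlDr !lt_min => /andP[-> ->]; rewrite !andbT; lra.
have wb' : fpoint_in (Rfun F S E) w b'.
  by split; rewrite ?b'0 ?(le_trans b'b b1).
have att' : suff_att (fatt (restrict F (Rfun F S E))) w b' y c.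
  by rewrite /suff_att restrict_attE.
have [z [a [[a01 az] [_ tol]]]] := def w b' wb' att'.
have Rz : 0 < Rfun F S E z.
  by case/andP: a01 => a0 _; apply: lt_le_trans a0 (le_trans az (ER z)).
rewrite /weaken !restrict_attE // in tol.
apply: none; exists z, a; split.
  by split=> //; exact: le_trans az (fcap_subl _ _ z).
by split=> //; rewrite (weaken_tol_eq b'b (conj r0 hs') (conj r0 tol)).
Qed.

Lemma weak_defends_at y C : S y = A y ->
  AE (restrict F (Rfun F S E)) (fcap (Dfun F S E) C) (fcap E S) ->
  forall c, fpoint_in E y c -> weak_defends F E y c.
Proof.
move=> Sy [[ER _ def] ED] c [c01 cy] w b wb [r0 hs].
have ESy := fcap_crisp Sy.
have c0 : 0 < c by case/andP: c01.
have S_y : 0 < S y.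
  by rewrite Sy; exact: lt_le_trans c0 (le_trans cy (E_subA y)).
have ESyD : E y <= Dfun F S E y by rewrite -ESy (le_trans (ED y)) ?fcap_subl.
case: (boolP (0 < S w)) => Sw.
  have yc : fpoint_in (fcap E S) y c by split; rewrite // ESy.
  have Ry : 0 < Rfun F S E y.
    by apply: lt_le_trans c0 (le_trans cy _); rewrite -ESy ER.
  exact: weakened_inside ER (def y c yc) Ry c01 Sw wb (conj r0 hs).
apply: Dfun_weakened c0 (le_trans cy ESyD) _ (conj r0 hs).
by case: wb => b01 bA; split; rewrite ?(outparentsE Sw S_y r0).
Qed.

End Component.

Theorem mainTheorem3 (R : realType) (Args : finType) (F : faf R Args)
  (HA : is_fuzzy (fargs F))
  (Hrho : forall x y, 0 <= fatt F x y <= 1)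
  (E : Args -> R) (HE : is_fuzzy E) (HEA : fsubset E (fargs F)) :
  forall C : Args -> R, is_fuzzy C -> fsubset C (fargs F) ->
    (AE F C E <->
     forall x : Args,
       AE (restrict F (Rfun F (SCC F x) E))
          (fcap (Dfun F (SCC F x) E) C)
          (fcap E (SCC F x))).
Proof.
move=> C _ _.
have A_ge0 y : 0 <= fargs F y by case/andP: (HA y).
have E_le1 y : E y <= 1 by case/andP: (HE y).
have rho_ge0 x y : 0 <= fatt F x y by case/andP: (Hrho x y).
split=> [EC x | loc].
  exact: AE_restrict_fcap A_ge0 E_le1 HEA rho_ge0 (@SCC_crisp _ _ F x) _ EC.
split; last first.
  move=> y; have [_ ED] := loc y.
  rewrite -(fcap_crisp HEA (SCC_self F y)).
  exact: le_trans (ED y) (fcap_subr _ _ y).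
split=> //.
- apply/(conflict_freeP F E_le1) => w y; have [[ER cf _] _] := loc y.
  exact: conflict_free_at E_le1 HEA (@SCC_crisp _ _ F y) _ (SCC_self F y)
    ER cf w.
- move=> y c; exact: weak_defends_at E_le1 HEA _ _ (SCC_self F y) (loc y) c.
Qed.
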